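(* Let $\omega(r)=\frac{r^2}{\sin^2r}-1$ (so $\omega(r)\searrow0$ as $r\searrow0$). Then $u(x)=\sin x$ on $(-\pi/4,\pi/4)$ is a Dirichlet $\omega$-minimizer: for every interval $(x-r,x+r)\subset(-\pi/4,\pi/4)$, $$\int_{x-r}^{x+r}(\cos s)^2\,ds\le(1+\omega(r))\int_{x-r}^{x+r}v'(s)^2\,ds,$$ where $v$ is the affine function with $v(x\pm r)=\sin(x\pm r)$ (the Dirichlet minimizer with these boundary values). *)

From Stdlib Require Import Reals.
From Coquelicot Require Export Coquelicot.
Export Stdlib.Reals.Reals.
Open Scope R_scope.

Definition omega (r : R) : R := r ^ 2 / (sin r) ^ 2 - 1.

(* The secant of [sin] over [[x - r, x + r]] has
   slope [cos x * sin r / r], so the right-hand side equals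
   [2 r cos^2 x = r (1 + cos 2x)], while the left-hand side is
   [r + cos 2x * sin 2r / 2].  Their difference is
   [cos 2x * (2r - sin 2r) / 2], nonnegative because [|x| <= PI/4] and
   [sin t < t] for [t > 0]. *)

From Stdlib Require Import Reals Lra.
From Coquelicot Require Import Coquelicot.
Open Scope R_scope.

(* The [:> R] keeps the equations at type [R] rather than the carrier of
   [RInt]'s normed module, so that [field] and [lra] still apply after rewriting. *)
Lemma RInt_cos_sq (L U : R) :
  RInt (fun s => cos s ^ 2) L U = (U - L) / 2 + (sin (2 * U) - sin (2 * L)) / 4 :> R.
Proof.
  replace ((U - L) / 2 + (sin (2 * U) - sin (2 * L)) / 4)
    with ((U / 2 + sin (2 * U) / 4) - (L / 2 + sin (2 * L) / 4)) by field.
  apply is_RInt_unique.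
  apply (is_RInt_derive (fun s => s / 2 + sin (2 * s) / 4)).
  - intros y _. auto_derive; auto. rewrite cos_2a_cos. field.
  - intros y _. apply (ex_derive_continuous (fun s => cos s ^ 2)). auto_derive; auto.
Qed.

Lemma RInt_cos_sq_centered (x r : R) :
  RInt (fun s => cos s ^ 2) (x - r) (x + r) = r + cos (2 * x) * sin (2 * r) / 2 :> R.
Proof.
  rewrite RInt_cos_sq.
  replace (2 * (x + r)) with (2 * x + 2 * r) by ring.
  replace (2 * (x - r)) with (2 * x - 2 * r) by ring.
  rewrite sin_plus, sin_minus. field.
Qed.

Lemma RInt_Derive_affine_sq (a b L U : R) :
  RInt (fun s => Derive (fun t => a * t + b) s ^ 2) L U = (U - L) * a ^ 2 :> R.
Proof.
  rewrite (RInt_ext _ (fun _ => a ^ 2)).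
  - rewrite RInt_const. reflexivity.
  - intros y _. f_equal. apply is_derive_unique. auto_derive; auto. ring.
Qed.

Lemma secant_slope_sin (x r a b : R) :
  r <> 0 ->
  a * (x - r) + b = sin (x - r) -> a * (x + r) + b = sin (x + r) ->
  a = cos x * sin r / r.
Proof.
  intros Hr E1 E2.
  rewrite sin_minus in E1. rewrite sin_plus in E2.
  apply (Rmult_eq_reg_r r); [field_simplify; lra | exact Hr].
Qed.

Lemma cos_double_ge0 (x : R) : - PI / 4 <= x <= PI / 4 -> 0 <= cos (2 * x).
Proof. intros Hx. apply cos_ge_0; lra. Qed.

Theorem mainTheorem8 :
  forall (x r a b : R),
    0 < r ->
    - PI / 4 <= x - r -> x + r <= PI / 4 ->
    (* v s = a * s + b is the affine function with v(x-r) = sin(x-r), v(x+r) = sin(x+r) *)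
    a * (x - r) + b = sin (x - r) ->
    a * (x + r) + b = sin (x + r) ->
    RInt (fun s => (cos s) ^ 2) (x - r) (x + r)
      <= (1 + omega r) *
         RInt (fun s => (Derive (fun t => a * t + b) s) ^ 2) (x - r) (x + r).
Proof.
  intros x r a b Hr H1 H2 E1 E2.
  assert (Hsin : 0 < sin r) by (apply sin_gt_0; generalize PI_RGT_0; lra).
  assert (Ha := secant_slope_sin x r a b (Rgt_not_eq _ _ Hr) E1 E2).
  assert (Henergy : (1 + omega r) * ((x + r - (x - r)) * a ^ 2)
                    = r * (1 + cos (2 * x))).
  { rewrite Ha, cos_2a_cos. unfold omega. field. lra. }
  rewrite RInt_cos_sq_centered, RInt_Derive_affine_sq, Henergy.
  assert (Hcos : 0 <= cos (2 * x)) by (apply cos_double_ge0; generalize PI_RGT_0; lra).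
  assert (Hsin2 : sin (2 * r) < 2 * r) by (apply sin_lt_x; lra).
  nra.
Qed.
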